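(* Let $E$ be a Bratteli diagram with levels $(V_n)_{n\ge 0}$ such that $k_{vw} := |vE^1w| > n$ for every $n\in\mathbb{N}$, $v\in V_n$ and $w\in V_{n+1}$, and let $G$ be its graph groupoid. For each such $v,w$ label $vE^1w = \{(vw)_0,\dots,(vw)_{k_{vw}-1}\}$ and let $\alpha$ be the graph automorphism of $E$ fixing every vertex with $\alpha((vw)_i) = (vw)_{(i+1) \bmod k_{vw}}$. Then there is an automorphism $\alpha$ of the topological groupoid $G$ with $\alpha(x,m,y) = (\alpha(x), m, \alpha(y))$ for $(x,m,y)\in G$ (where $\alpha(x)_i = \alpha(x_i)$), and this automorphism satisfies: (W) if $x\in G^{(0)}$ and $l\in\mathbb{Z}$ satisfy $[x]=[\alpha^l(x)]$ then $l=0$; and (L) there is a basis $\mathcal{B}$ for the topology on $G^{(0)}$ of compact open bisections such that for every $V\in\mathcal{B}$ there is $l\ge1$ with $\alpha^{-l}(V)\subseteq V$.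
   Context: A Bratteli diagram is a row-finite directed graph $E$ (countable vertex set $E^0$, edge set $E^1$, maps $r,s:E^1\to E^0$) whose vertex set is partitioned into finite sets $V_n$, $n=0,1,2,\dots$, with $E^1 = \bigcup_n V_nE^1V_{n+1}$ (here $vE^1w = \{e : r(e)=v, s(e)=w\}$), such that $vE^1\ne\emptyset$ for all $v\in E^0$ and $E^1v\ne\emptyset$ for all $v\notin V_0$. Infinite paths are sequences $x = x_1x_2\dots$ of edges with $s(x_i)=r(x_{i+1})$; $E^\infty$ is the set of them, and $\sigma^n(x) = x_{n+1}x_{n+2}\dots$. For a finite path $\mu$, $Z(\mu) = \{x\in E^\infty : x \text{ begins with } \mu\}$. The graph groupoid is $G = \{(x,m-n,y) : x,y\in E^\infty, \sigma^m(x)=\sigma^n(y)\}$ with $(x,k,y)(y,l,z)=(x,k+l,z)$, $(x,k,y)^{-1}=(y,-k,x)$, unit space identified with $E^\infty$, and topology with basic open sets $Z(\mu,\nu)=\{(\mu z, |\mu|-|\nu|, \nu z) : z\in E^\infty\}$ for finite paths $\mu,\nu$ with $s(\mu)=s(\nu)$. For $u\in G^{(0)}$, $[u]=\{r(g): s(g)=u\}$. *)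

From Stdlib Require List.
From mathcomp Require Import all_boot all_order all_algebra.
Set Implicit Arguments. Unset Strict Implicit. Unset Printing Implicit Defensive.
Import GRing.Theory Num.Theory.

(* Concrete encoding of a Bratteli diagram:
   level n has the vertices 0, ..., N n - 1 (the finite set V_n), and for
   v in V_n, w in V_{n+1} the edge set vE^1w is {(vw)_0, ..., (vw)_{k n v w - 1}};
   the edge (vw)_i is encoded as [Edge n v w i], with r = (n,v), s = (n+1,w). *)

Record edge := Edge { elev : nat; erng : nat; esrc : nat; eidx : nat }.
Definition vertex := (nat * nat)%type.

Section Bratteli.
Variables (N : nat -> nat) (k : nat -> nat -> nat -> nat).

Definition r (e : edge) : vertex := (elev e, erng e).
Definition s (e : edge) : vertex := ((elev e).+1, esrc e).

Definition valid_vertex (v : vertex) : Prop := (v.2 < N v.1)%N.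
Definition valid_edge (e : edge) : Prop :=
  [/\ (erng e < N (elev e))%N, (esrc e < N (elev e).+1)%N
    & (eidx e < k (elev e) (erng e) (esrc e))%N].

(* infinite paths x = x_0 x_1 ... (the paper's x_1 x_2 ...) *)
Definition epath := nat -> edge.
Definition is_inf_path (x : epath) : Prop :=
  forall j, valid_edge (x j) /\ s (x j) = r (x j.+1).
Definition shift (m : nat) (x : epath) : epath := fun j => x (m + j).

Definition fin_path (a : nat) (mu : epath) (v : vertex) : Prop :=
  [/\ forall j, (j < a)%N -> valid_edge (mu j),
      forall j, (j.+1 < a)%N -> s (mu j) = r (mu j.+1)
    & if a is a'.+1 then s (mu a') = v else valid_vertex v].

Definition alpha_e (e : edge) : edge :=
  Edge (elev e) (erng e) (esrc e)
       ((eidx e).+1 %% k (elev e) (erng e) (esrc e)).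
Definition alpha_inv_e (e : edge) : edge :=
  Edge (elev e) (erng e) (esrc e)
       ((eidx e + (k (elev e) (erng e) (esrc e)).-1) %% k (elev e) (erng e) (esrc e)).
Definition alpha_pow_e (l : int) (e : edge) : edge :=
  match l with
  | Posz m => iter m alpha_e e
  | Negz m => iter m.+1 alpha_inv_e e
  end.
Definition alpha_pow (l : int) (x : epath) : epath := fun j => alpha_pow_e l (x j).

Record gelt := GT { gx : epath; gk : int; gy : epath }.
Definition inG (g : gelt) : Prop :=
  [/\ is_inf_path (gx g), is_inf_path (gy g)
    & exists m n : nat, gk g = (m%:Z - n%:Z)%R /\ shift m (gx g) = shift n (gy g)].
Definition unit_of (x : epath) : gelt := GT x 0 x.
Definition inUnit (g : gelt) : Prop := exists x, is_inf_path x /\ g = unit_of x.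
Definition rg (g : gelt) : gelt := unit_of (gx g).
Definition sg (g : gelt) : gelt := unit_of (gy g).
Definition composable (g h : gelt) : Prop := gy g = gx h.
Definition gmul (g h : gelt) : gelt := GT (gx g) (gk g + gk h)%R (gy h).
Definition ginv (g : gelt) : gelt := GT (gy g) (- gk g)%R (gx g).

Definition gorbit (x : epath) : epath -> Prop :=
  fun z => exists g, inG g /\ sg g = unit_of x /\ rg g = unit_of z.

(* basic open set Z(mu, nu), |mu| = a, |nu| = b, s(mu) = s(nu) = v *)
Definition Zset (a b : nat) (mu nu : epath) (v : vertex) : gelt -> Prop :=
  fun g => [/\ inG g, gk g = (a%:Z - b%:Z)%R &
              exists z, is_inf_path z /\ r (z 0) = v /\
                (forall j, gx g j = if (j < a)%N then mu j else z (j - a)) /\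
                (forall j, gy g j = if (j < b)%N then nu j else z (j - b))].

Definition isOpen (U : gelt -> Prop) : Prop :=
  (forall g, U g -> inG g) /\
  forall g, U g -> exists a b mu nu v,
      [/\ fin_path a mu v, fin_path b nu v, Zset a b mu nu v g
        & forall h, Zset a b mu nu v h -> U h].

Definition gcompact (V : gelt -> Prop) : Prop :=
  forall F : (gelt -> Prop) -> Prop,
    (forall U, F U -> isOpen U) ->
    (forall g, V g -> exists U, F U /\ U g) ->
    exists l : seq (gelt -> Prop),
      (forall U, List.In U l -> F U) /\
      (forall g, V g -> exists U, List.In U l /\ U g).

Definition bisection (V : gelt -> Prop) : Prop :=
  (forall g, V g -> inG g) /\
  (forall g h, V g -> V h -> rg g = rg h -> g = h) /\
  (forall g h, V g -> V h -> sg g = sg h -> g = h).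

Definition openUnit (W : gelt -> Prop) : Prop :=
  (forall g, W g -> inUnit g) /\
  exists U, isOpen U /\ forall g, W g <-> (U g /\ inUnit g).

Definition unit_basis (B : (gelt -> Prop) -> Prop) : Prop :=
  (forall V, B V -> openUnit V) /\
  forall W g, openUnit W -> W g -> exists V, [/\ B V, V g & forall h, V h -> W h].

Definition Phi (l : int) (g : gelt) : gelt :=
  GT (alpha_pow l (gx g)) (gk g) (alpha_pow l (gy g)).

Definition is_top_groupoid_aut (f : gelt -> gelt) : Prop :=
  [/\ forall g, inG g -> inG (f g),
      forall h, inG h -> exists! g, inG g /\ f g = h,
      forall g h, inG g -> inG h -> composable g h ->
        composable (f g) (f h) /\ f (gmul g h) = gmul (f g) (f h),
      forall g, inG g -> f (ginv g) = ginv (f g)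
    & forall U, isOpen U ->
        isOpen (fun g => inG g /\ U (f g)) /\
        isOpen (fun h => exists g, U g /\ h = f g)].

End Bratteli.

From mathcomp Require Import all_boot all_order all_algebra zify.
From Stdlib Require Import ClassicalEpsilon FunctionalExtensionality Classical.
Set Implicit Arguments. Unset Strict Implicit. Unset Printing Implicit Defensive.
Import GRing.Theory.

(* Since alpha fixes every vertex, it acts edgewise on paths preserving levels, so it
   commutes with shifts and maps each basic open set Z(mu, nu) onto
   Z(alpha mu, alpha nu); hence it induces an automorphism of the topological
   groupoid.  If [x] = [alpha^l x], then some tail of x equals the tail of alpha^l x
   starting at the same level, so alpha^l fixes an edge between levels n >= |l| and
   n + 1; as alpha cyclically permutes the k_vw > n parallel edges, l = 0.  For (L)
   take the cylinders Z(mu, mu): they are compact by Koenig's lemma (the diagram is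
   row-finite), and alpha^-l maps Z(mu, mu) into itself when l is the product of the
   multiplicities of the edges of mu, since alpha^-l then fixes every edge of mu. *)

Section VertexFixingMaps.
Variables (N : nat -> nat) (k : nat -> nat -> nat -> nat).

Definition vertex_fixing (f : edge -> edge) : Prop :=
  forall e, [/\ elev (f e) = elev e, erng (f e) = erng e, esrc (f e) = esrc e
    & valid_edge N k e -> valid_edge N k (f e)].

Definition map_epath (f : edge -> edge) (x : epath) : epath := fun j => f (x j).

Definition map_gelt (f : edge -> edge) (g : gelt) : gelt :=
  GT (map_epath f (gx g)) (gk g) (map_epath f (gy g)).

Variable f : edge -> edge.
Hypothesis f_fix : vertex_fixing f.

Lemma vertex_fixing_r e : r (f e) = r e.
Proof. by have [h1 h2 _ _] := f_fix e; rewrite /r h1 h2. Qed.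

Lemma vertex_fixing_s e : s (f e) = s e.
Proof. by have [h1 _ h3 _] := f_fix e; rewrite /s h1 h3. Qed.

Lemma vertex_fixing_valid e : valid_edge N k e -> valid_edge N k (f e).
Proof. by have [_ _ _] := f_fix e. Qed.

Lemma vertex_fixing_iter m : vertex_fixing (iter m f).
Proof.
elim: m => [|m IH] e //=.
have [a1 a2 a3 a4] := IH e; have [b1 b2 b3 b4] := f_fix (iter m f e).
by split; [rewrite b1|rewrite b2|rewrite b3|move=> /a4 /b4].
Qed.

Lemma is_inf_path_map x : is_inf_path N k x -> is_inf_path N k (map_epath f x).
Proof.
move=> hx j; have [h1 h2] := hx j; split; first exact: vertex_fixing_valid.
by rewrite /map_epath vertex_fixing_r vertex_fixing_s.
Qed.

Lemma inG_map g : inG N k g -> inG N k (map_gelt f g).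
Proof.
move=> [hx hy [m [n [hk hsh]]]]; split; try exact: is_inf_path_map.
by exists m, n; split=> //=; rewrite -[shift m _]/(map_epath f (shift m (gx g))) hsh.
Qed.

Lemma fin_path_map a mu v : fin_path N k a mu v -> fin_path N k a (map_epath f mu) v.
Proof.
move=> [h1 h2 h3]; split.
- by move=> j /h1; apply: vertex_fixing_valid.
- by move=> j /h2; rewrite /map_epath vertex_fixing_r vertex_fixing_s.
- by case: a h1 h2 h3 => // a' _ _; rewrite /map_epath vertex_fixing_s.
Qed.

Lemma Zset_map a b mu nu v g : Zset N k a b mu nu v g ->
  Zset N k a b (map_epath f mu) (map_epath f nu) v (map_gelt f g).
Proof.
move=> [hg hk [z [hz [hr [hx hy]]]]]; split; [exact: inG_map | by [] |].
exists (map_epath f z); split; first exact: is_inf_path_map.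
split; first by rewrite /map_epath vertex_fixing_r.
by split=> j /=; rewrite /map_epath ?hx ?hy; case: ifP.
Qed.

End VertexFixingMaps.

Section Alpha.
Variables (N : nat -> nat) (k : nat -> nat -> nat -> nat).

Lemma alpha_vertex_fixing : vertex_fixing N k (alpha_e k).
Proof.
move=> [l v w i]; split=> //; rewrite /valid_edge /= => -[h1 h2 h3]; split=> //.
by rewrite ltn_pmod //; lia.
Qed.

Lemma alpha_inv_vertex_fixing : vertex_fixing N k (alpha_inv_e k).
Proof.
move=> [l v w i]; split=> //; rewrite /valid_edge /= => -[h1 h2 h3]; split=> //.
by rewrite ltn_pmod //; lia.
Qed.

Lemma alpha_pow_vertex_fixing l : vertex_fixing N k (alpha_pow_e k l).
Proof.
by case: l => m; apply: vertex_fixing_iter;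
  [exact: alpha_vertex_fixing | exact: alpha_inv_vertex_fixing].
Qed.

Lemma alpha_eK e : valid_edge N k e -> alpha_inv_e k (alpha_e k e) = e.
Proof.
case: e => l v w i [/= _ _ hi]; rewrite /alpha_inv_e /alpha_e /=; congr Edge.
rewrite modnDml addSn -addnS prednK; last lia.
by rewrite modnDr modn_small.
Qed.

Lemma alpha_inv_eK e : valid_edge N k e -> alpha_e k (alpha_inv_e k e) = e.
Proof.
case: e => l v w i [/= _ _ hi]; rewrite /alpha_inv_e /alpha_e /=; congr Edge.
rewrite -addn1 modnDml -addnA addn1 prednK; last lia.
by rewrite modnDr modn_small.
Qed.

End Alpha.

Section Automorphism.
Variables (N : nat -> nat) (k : nat -> nat -> nat -> nat).

Lemma Zset_eq_on a b mu nu mu' nu' v g :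
  (forall j, (j < a)%N -> mu j = mu' j) -> (forall j, (j < b)%N -> nu j = nu' j) ->
  Zset N k a b mu nu v g -> Zset N k a b mu' nu' v g.
Proof.
move=> e1 e2 [hg hk [z [hz [hr [hx hy]]]]]; split=> //; exists z; do 2 split=> //.
by split=> j; [rewrite hx|rewrite hy]; case: ifP => // hj; [exact: e1|exact: e2].
Qed.

Lemma isOpen_ext (U U' : gelt -> Prop) :
  (forall g, U g <-> U' g) -> isOpen N k U -> isOpen N k U'.
Proof.
move=> hUU' [hU1 hU2]; split=> [g /hUU' /hU1 //|g /hUU' /hU2].
move=> [a [b [mu [nu [v [f1 f2 hz hsub]]]]]]; exists a, b, mu, nu, v; split=> //.
by move=> h /hsub /hUU'.
Qed.

Variables (f f' : edge -> edge).
Hypotheses (f_fix : vertex_fixing N k f) (f'_fix : vertex_fixing N k f').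
Hypotheses (fK : forall e, valid_edge N k e -> f' (f e) = e)
           (f'K : forall e, valid_edge N k e -> f (f' e) = e).

Lemma map_geltK g : inG N k g -> map_gelt f' (map_gelt f g) = g.
Proof.
case: g => x m y [/= hx hy _]; rewrite /map_gelt /=; congr GT;
  apply: functional_extensionality => j; rewrite /map_epath fK //;
  [exact: (hx j).1 | exact: (hy j).1].
Qed.

Lemma isOpen_preimage U : isOpen N k U ->
  isOpen N k (fun g => inG N k g /\ U (map_gelt f g)).
Proof.
move=> [hU1 hU2]; split=> [g [] //|g [hg /hU2]].
move=> [a [b [mu [nu [v [f1 f2 hz hsub]]]]]].
have f'f_on c la w : fin_path N k c la w ->
    forall j, (j < c)%N -> map_epath f (map_epath f' la) j = la j.
  by move=> [hv _ _] j hj; rewrite /map_epath f'K //; apply: hv.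
exists a, b, (map_epath f' mu), (map_epath f' nu), v; split.
- exact: fin_path_map.
- exact: fin_path_map.
- by rewrite -(map_geltK hg); apply: Zset_map.
- move=> h hh; split; first by case: hh.
  by apply: hsub; apply: (Zset_eq_on (f'f_on _ _ _ f1) (f'f_on _ _ _ f2)); apply: Zset_map.
Qed.

End Automorphism.

Theorem Phi1_top_groupoid_aut (N : nat -> nat) (k : nat -> nat -> nat -> nat) :
  is_top_groupoid_aut N k (Phi k 1%R).
Proof.
have -> : Phi k 1%R = map_gelt (alpha_e k) by [].
have fix1 := alpha_vertex_fixing N k; have fix2 := alpha_inv_vertex_fixing N k.
have K1 := @alpha_eK N k; have K2 := @alpha_inv_eK N k.
split=> //.
- by move=> g; apply: inG_map.
- move=> h hh; exists (map_gelt (alpha_inv_e k) h).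
  split=> [|g [hg <-]]; last exact: (map_geltK K1).
  by split; [apply: inG_map | apply: (map_geltK K2)].
- by move=> g h _ _ hgh; split=> //; rewrite /composable /= hgh.
- move=> U hU; split; first exact: (isOpen_preimage fix1 fix2 K1 K2 hU).
  apply: (isOpen_ext _ (isOpen_preimage fix2 fix1 K2 K1 hU)) => h; split.
    by move=> [hh hUh]; exists (map_gelt (alpha_inv_e k) h); rewrite (map_geltK K2).
  move=> [g [hUg ->]]; have hg := proj1 hU g hUg.
  by split; [apply: inG_map | rewrite (map_geltK K1)].
Qed.

Section Wandering.
Variables (N : nat -> nat) (k : nat -> nat -> nat -> nat).

Definition edge_mult (e : edge) : nat := k (elev e) (erng e) (esrc e).

Lemma eidx_iter_alpha e m : (eidx e < edge_mult e)%N ->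
  eidx (iter m (alpha_e k) e) = ((eidx e + m) %% edge_mult e)%N.
Proof.
move=> hi; elim: m => [|m IH]; first by rewrite addn0 modn_small.
have [h1 h2 h3 _] := vertex_fixing_iter (alpha_vertex_fixing N k) m e.
by rewrite /= /alpha_e /= IH h1 h2 h3 -/(edge_mult e) -addn1 modnDml -addnA addn1 addnS.
Qed.

Lemma eidx_iter_alpha_inv e m : (eidx e < edge_mult e)%N ->
  eidx (iter m (alpha_inv_e k) e) = ((eidx e + m * (edge_mult e).-1) %% edge_mult e)%N.
Proof.
move=> hi; elim: m => [|m IH]; first by rewrite mul0n addn0 modn_small.
have [h1 h2 h3 _] := vertex_fixing_iter (alpha_inv_vertex_fixing N k) m e.
by rewrite /= /alpha_inv_e /= IH h1 h2 h3 -/(edge_mult e) modnDml -addnA mulSnr.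
Qed.

Lemma alpha_pow_e_fixed e l : (eidx e < edge_mult e)%N -> (absz l < edge_mult e)%N ->
  alpha_pow_e k l e = e -> l = 0%R.
Proof.
move=> hi hl /(f_equal eidx); case: l hl => p hl.
- rewrite /= eidx_iter_alpha // -{2}(modn_small hi) -{2}(addn0 (eidx e)) => /eqP.
  by rewrite eqn_modDl mod0n modn_small // => /eqP ->.
- rewrite -[alpha_pow_e _ _ _]/(iter p.+1 _ e) eidx_iter_alpha_inv // => h.
  have m_gt0 : (0 < edge_mult e)%N := leq_ltn_trans (leq0n _) hi.
  have : (eidx e + p.+1 = eidx e + 0 %[mod edge_mult e])%N.
    by rewrite addn0 -{1}h modnDml -addnA -mulnSr (prednK m_gt0) addnC modnMDl.
  by move/eqP; rewrite eqn_modDl mod0n modn_small; last exact: hl.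
Qed.

Lemma elev_inf_path x j : is_inf_path N k x -> elev (x j) = (elev (x 0) + j)%N.
Proof.
move=> hx; elim: j => [|j IH]; first by rewrite addn0.
by have [_ [<- _]] := hx j; rewrite IH addnS.
Qed.

Hypothesis Hk : forall n v w, (v < N n)%N -> (w < N n.+1)%N -> (n < k n v w)%N.

Lemma shift_alpha_pow_eq0 x l m n : is_inf_path N k x ->
  shift m x = shift n (alpha_pow k l x) -> l = 0%R.
Proof.
move=> hx hsh.
have hmn : m = n.
  have := f_equal (fun y => elev (y 0)) hsh; rewrite /shift /alpha_pow.
  have [-> _ _ _] := alpha_pow_vertex_fixing N k l (x (n + 0)).
  by rewrite (elev_inf_path (m + 0) hx) (elev_inf_path (n + 0) hx); lia.
subst n; set e := x (m + absz l)%N.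
have [[hv1 hv2 hv3] _] := hx (m + absz l)%N; rewrite -/e in hv1 hv2 hv3.
have hl : (absz l < edge_mult e)%N.
  apply: leq_ltn_trans (Hk hv1 hv2).
  by rewrite /e (elev_inf_path (m + absz l) hx); lia.
by apply: (alpha_pow_e_fixed hv3 hl); have := f_equal (fun y => y (absz l)) hsh.
Qed.

Theorem orbit_alpha_pow_eq0 x l : is_inf_path N k x ->
  (forall z, gorbit N k x z <-> gorbit N k (alpha_pow k l x) z) -> l = 0%R.
Proof.
move=> hx horb.
have : gorbit N k x x by exists (unit_of x); split=> //; split=> //; exists 0%N, 0%N.
move=> /horb [g [[_ _ [m [n [_ hsh]]]] [/(f_equal gx) /= hy /(f_equal gx) /= hx']]].
by apply: (shift_alpha_pow_eq0 (m := m) (n := n) hx); rewrite -hy -hx'.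
Qed.

End Wandering.

Section Cylinders.
Variables (N : nat -> nat) (k : nat -> nat -> nat -> nat).

Definition cylinder (a : nat) (mu : epath) (v : vertex) (x : epath) : Prop :=
  [/\ is_inf_path N k x, forall j, (j < a)%N -> x j = mu j & r (x a) = v].

Lemma inG_unit x : is_inf_path N k x -> inG N k (unit_of x).
Proof. by move=> hx; split=> //; exists 0%N, 0%N. Qed.

Lemma is_inf_path_shift x m : is_inf_path N k x -> is_inf_path N k (shift m x).
Proof. by move=> hx j; rewrite /shift addnS; apply: hx. Qed.

Lemma Zset_unit a mu v x : cylinder a mu v x -> Zset N k a a mu mu v (unit_of x).
Proof.
move=> [hx hmu hr]; split; [exact: inG_unit | by rewrite /= subrr |].
exists (shift a x); split; first exact: is_inf_path_shift.
split; first by rewrite /shift addn0.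
by split=> j /=; case: ifP => hj; try exact: hmu; rewrite /shift subnKC //; lia.
Qed.

Lemma Zset_diagE a mu v g :
  Zset N k a a mu mu v g <-> exists x, g = unit_of x /\ cylinder a mu v x.
Proof.
split=> [[hg hk [z [hz [hr [hx hy]]]]]|[x [-> hx]]]; last exact: Zset_unit.
have exy : gx g = gy g by apply: functional_extensionality => j; rewrite hx hy.
exists (gx g); split.
  by case: g hg hk exy {hx hy} => x0 k0 y0 /= _ -> <-; rewrite subrr.
split; [by case: hg | by move=> j hj; rewrite hx hj | by rewrite hx ltnn subnn].
Qed.

Lemma isOpen_unit_nbhd U x : isOpen N k U -> U (unit_of x) ->
  exists d, forall y, is_inf_path N k y -> (forall j, (j <= d)%N -> y j = x j) ->
    U (unit_of y).
Proof.
move=> [_ hU] /hU [a [b [mu [nu [v [_ _ [_ hk [z [_ [hrz [hxz hyz]]]]] hsub]]]]]].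
have {hk} eab : a = b by move: hk => /=; lia.
subst b; exists a => y hy hyx.
have emu j : (j < a)%N -> x j = mu j by move=> hj; have := hxz j; rewrite /= hj.
have enu j : (j < a)%N -> mu j = nu j by move=> hj; have := hyz j; rewrite /= hj -emu.
apply/hsub/(Zset_eq_on (fun j _ => erefl) enu)/Zset_unit; split=> //.
- by move=> j hj; rewrite hyx ?emu // ltnW.
- by rewrite hyx // -hrz; have := hxz a; rewrite /= ltnn subnn => <-.
Qed.

End Cylinders.

Section FiniteCovers.
Variable F : (gelt -> Prop) -> Prop.

Definition finitely_covered (S : gelt -> Prop) : Prop :=
  exists l : seq (gelt -> Prop),
    (forall U, List.In U l -> F U) /\ (forall g, S g -> exists U, List.In U l /\ U g).

Lemma finitely_covered_sub (S T : gelt -> Prop) :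
  (forall g, S g -> T g) -> finitely_covered T -> finitely_covered S.
Proof. by move=> hST [l [hF hcov]]; exists l; split=> // g /hST /hcov. Qed.

Lemma finitely_covered_bigcup (A : nat -> gelt -> Prop) n :
  (forall i, (i < n)%N -> finitely_covered (A i)) ->
  finitely_covered (fun g => exists2 i, (i < n)%N & A i g).
Proof.
elim: n => [|n IH] hA; first by exists [::]; split=> // g [].
have [l1 [hF1 hcov1]] := IH (fun i hi => hA i (ltnW hi)).
have [l2 [hF2 hcov2]] := hA n (ltnSn n).
exists (l1 ++ l2); split=> [U /List.in_app_iff [/hF1|/hF2] //|g [i]].
rewrite ltnS leq_eqVlt => /orP [/eqP -> /hcov2|hi hg].
  by move=> [U [hU hUg]]; exists U; split=> //; apply/List.in_app_iff; right.
have [U [hU hUg]] := hcov1 g (ex_intro2 _ _ i hi hg).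
by exists U; split=> //; apply/List.in_app_iff; left.
Qed.

Lemma finitely_covered_bigcup2 (A : nat -> nat -> gelt -> Prop) n (m : nat -> nat) :
  (forall i j, (i < n)%N -> (j < m i)%N -> finitely_covered (A i j)) ->
  finitely_covered (fun g => exists i j, [/\ (i < n)%N, (j < m i)%N & A i j g]).
Proof.
move=> hA; apply: (finitely_covered_sub (T := fun g =>
  exists2 i, (i < n)%N & (fun g => exists2 j, (j < m i)%N & A i j g) g)).
  by move=> g [i [j [hi hj hg]]]; exists i => //; exists j.
by apply: finitely_covered_bigcup => i hi; apply: finitely_covered_bigcup => j; apply: hA.
Qed.

Lemma not_finitely_covered_nonempty S : ~ finitely_covered S -> exists g, S g.
Proof.
move=> hS; apply: NNPP => hempty; apply: hS; exists [::]; split=> // g hg.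
by case: hempty; exists g.
Qed.

End FiniteCovers.

Section Compactness.
Variables (N : nat -> nat) (k : nat -> nat -> nat -> nat).
Variables (a : nat) (mu : epath) (v : vertex) (F : (gelt -> Prop) -> Prop).

Definition subcylinder (m : nat) (y : epath) (g : gelt) : Prop :=
  exists x, g = unit_of x /\ cylinder N k a mu v x /\ forall j, (j < m)%N -> x j = y j.

Definition set_edge (y : epath) (m : nat) (e : edge) : epath :=
  fun j => if j == m then e else y j.

Lemma subcylinder_split m y : (a <= m)%N ->
  let p := if m == a then v else s (y m.-1) in
  forall g, subcylinder m y g -> exists w i, [/\ (w < N p.1.+1)%N, (i < k p.1 p.2 w)%N &
    subcylinder m.+1 (set_edge y m (Edge p.1 p.2 w i)) g].
Proof.
move=> ham p g [x [-> [[hx hmu hr] hxy]]].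
have hrm : r (x m) = p.
  rewrite /p; case: eqP => [->|hne] //.
  case: m ham hne hxy {p} => [|m] ham hne hxy; first by lia.
  by rewrite /= -(hx m).2 hxy.
have [[hv1 hv2 hv3] _] := hx m.
exists (esrc (x m)), (eidx (x m)); rewrite -hrm; split=> //.
exists x; split=> //; split=> // j hj; rewrite /set_edge.
by case: eqP => [-> | hne]; [case: (x m) | apply: hxy; lia].
Qed.

Lemma uncovered_extension m y : (a <= m)%N -> ~ finitely_covered F (subcylinder m y) ->
  exists e, ~ finitely_covered F (subcylinder m.+1 (set_edge y m e)).
Proof.
move=> ham hm; apply: NNPP => hall; apply/hm/finitely_covered_sub.
  exact: subcylinder_split.
apply: finitely_covered_bigcup2 => w i _ _.
by apply: NNPP => hn; apply: hall; eexists; exact: hn.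
Qed.

Definition next_edge (m : nat) (y : epath) : edge :=
  epsilon (inhabits (Edge 0 0 0 0))
    (fun e => ~ finitely_covered F (subcylinder m.+1 (set_edge y m e))).

Fixpoint bad_prefix (n : nat) : epath :=
  if n is n'.+1 then set_edge (bad_prefix n') (a + n') (next_edge (a + n') (bad_prefix n'))
  else mu.

Definition bad_path : epath := fun j => bad_prefix j.+1 j.

Hypothesis uncovered : ~ finitely_covered F (subcylinder a mu).

Lemma bad_prefix_uncovered n : ~ finitely_covered F (subcylinder (a + n) (bad_prefix n)).
Proof.
elim: n => [|n IH]; first by rewrite addn0.
rewrite addnS /=; apply: (epsilon_spec (inhabits (Edge 0 0 0 0))
  (fun e => ~ finitely_covered F (subcylinder (a + n).+1 (set_edge (bad_prefix n) (a + n) e)))).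
by apply: uncovered_extension => //; apply: leq_addr.
Qed.

Lemma bad_prefix_stable n d j : (j < a + n)%N -> bad_prefix (n + d) j = bad_prefix n j.
Proof.
move=> hj; elim: d => [|d IH]; first by rewrite addn0.
by rewrite addnS /= /set_edge; case: eqP => // h; lia.
Qed.

Lemma bad_prefix_path n j : (j < a + n)%N -> bad_prefix n j = bad_path j.
Proof.
move=> hj; rewrite /bad_path -(bad_prefix_stable j.+1 hj) -(@bad_prefix_stable j.+1 n j).
  by rewrite addnC.
by rewrite addnS ltnS leq_addl.
Qed.

Lemma bad_path_subcylinder n g : subcylinder (a + n) (bad_prefix n) g ->
  exists x, g = unit_of x /\ cylinder N k a mu v x /\
            forall j, (j < a + n)%N -> x j = bad_path j.
Proof.
move=> [x [-> [hx hxy]]]; exists x; do 2 split=> //.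
by move=> j hj; rewrite hxy // bad_prefix_path.
Qed.

Lemma bad_path_cylinder : cylinder N k a mu v bad_path.
Proof.
have witness n : exists g, subcylinder (a + n) (bad_prefix n) g.
  exact: not_finitely_covered_nonempty (bad_prefix_uncovered (n := n)).
split.
- move=> j; have [_ /bad_path_subcylinder [x [_ [[hx _ _] hxb]]]] := witness j.+2.
  by rewrite -!hxb; try apply: hx; lia.
- by move=> j hj; rewrite -(bad_prefix_path (n := 0)) // addn0.
- have [_ /bad_path_subcylinder [x [_ [[_ _ hr] hxb]]]] := witness 1.
  by rewrite -hxb // addn1.
Qed.

End Compactness.

Lemma Zset_diag_compact N k a mu v : gcompact N k (Zset N k a a mu mu v).
Proof.
move=> F hF hcov; apply: NNPP => hn.
have uncovered : ~ finitely_covered F (subcylinder N k a mu v a mu).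
  move=> hc; apply/hn/(finitely_covered_sub _ hc) => g /Zset_diagE [x [-> hx]].
  by exists x; do 2 split=> //; case: hx.
have hb := bad_path_cylinder uncovered.
have [U [hFU hU]] := hcov _ (Zset_unit hb).
have [d hd] := isOpen_unit_nbhd (hF U hFU) hU.
apply: (bad_prefix_uncovered uncovered (n := d.+1)); exists [:: U]; split=> [U' [<-|[]] //|g].
move=> /bad_path_subcylinder [x [-> [[hx _ _] hxb]]].
by exists U; split; [left | apply: hd => // j hj; apply: hxb; lia].
Qed.

Section CylinderBasis.
Variables (N : nat -> nat) (k : nat -> nat -> nat -> nat).

Definition cylinder_sets (V : gelt -> Prop) : Prop :=
  exists a mu v, fin_path N k a mu v /\ V = Zset N k a a mu mu v.

Lemma alpha_pow_e_period e l : valid_edge N k e -> (edge_mult k e %| l.+1)%N ->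
  alpha_pow_e k (- (l.+1)%:Z)%R e = e.
Proof.
move=> [hv1 hv2 hv3] /dvdnP [c hc].
have [h1 h2 h3 _] := vertex_fixing_iter (alpha_inv_vertex_fixing N k) l.+1 e.
have h4 := @eidx_iter_alpha_inv N k e l.+1 hv3.
change (iter l.+1 (alpha_inv_e k) e = e).
move: h1 h2 h3 h4; case: (iter l.+1 (alpha_inv_e k) e) => a1 a2 a3 a4 /= -> -> ->.
rewrite hc mulnAC addnC modnMDl modn_small // => ->.
by case: e hc hv1 hv2 hv3.
Qed.

Lemma isOpen_Zset a b mu nu v : fin_path N k a mu v -> fin_path N k b nu v ->
  isOpen N k (Zset N k a b mu nu v).
Proof. by move=> hmu hnu; split=> [g []|g hg] //; exists a, b, mu, nu, v. Qed.

Lemma Zset_diag_bisection a mu v : bisection N k (Zset N k a a mu mu v).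
Proof.
split=> [g []|] //.
by split=> g h /Zset_diagE [x [-> _]] /Zset_diagE [y [-> _]].
Qed.

Lemma Zset_diag_periodic a mu v : fin_path N k a mu v ->
  exists l : nat, (0 < l)%N /\
    forall g, Zset N k a a mu mu v g -> Zset N k a a mu mu v (Phi k (- l%:Z)%R g).
Proof.
move=> [hmu _ _].
have hpos (i : 'I_a) : (0 < edge_mult k (mu i))%N.
  by have [_ _ hi] := hmu i (ltn_ord i); apply: leq_ltn_trans hi.
pose P := (\prod_(i < a) edge_mult k (mu i))%N.
have dvdP j : (j < a)%N -> (edge_mult k (mu j) %| P)%N.
  by move=> hj; rewrite /P (bigD1 (Ordinal hj)) //= dvdn_mulr.
have : (0 < P)%N := prodn_gt0 hpos.
clearbody P; case: P dvdP => // l dvdP _; exists l.+1; split=> //.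
move=> g /Zset_diagE [x [-> [hx hxmu hr]]]; apply/Zset_diagE.
exists (alpha_pow k (- (l.+1)%:Z)%R x); split=> //; split.
- exact: (is_inf_path_map (alpha_pow_vertex_fixing N k _)).
- move=> j hj; rewrite /alpha_pow hxmu // alpha_pow_e_period //; first exact: hmu.
  exact: dvdP.
- by rewrite /alpha_pow (vertex_fixing_r (alpha_pow_vertex_fixing N k _)).
Qed.

Lemma cylinder_sets_unit_basis : unit_basis N k cylinder_sets.
Proof.
split.
- move=> V [a [mu [v [hf ->]]]]; split.
    by move=> g /Zset_diagE [x [-> [hx _ _]]]; exists x.
  exists (Zset N k a a mu mu v); split; first exact: isOpen_Zset.
  move=> g; split=> [hg|[]//]; split=> //.
  by have [x [-> [hx _ _]]] := proj1 (Zset_diagE _ _ _ _ _ _) hg; exists x.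
- move=> W g [_ [U [hU hWU]]] /hWU [hUg [x [hx eg]]]; subst g.
  have [d hd] := isOpen_unit_nbhd hU hUg.
  exists (Zset N k d.+1 d.+1 x x (r (x d.+1))); split.
  + exists d.+1, x, (r (x d.+1)); split=> //; split=> [j _|j _|];
      [exact: (hx j).1 | exact: (hx j).2 | by rewrite /= (hx d).2].
  + by apply: Zset_unit.
  + move=> h /Zset_diagE [y [-> [hy hyx _]]]; apply/hWU; split.
      by apply: hd => // j hj; apply: hyx.
    by exists y.
Qed.

End CylinderBasis.

Theorem lemma6p3 (N : nat -> nat) (k : nat -> nat -> nat -> nat)
  (Hout : forall n v, (v < N n)%N -> exists w, (w < N n.+1)%N /\ (0 < k n v w)%N)
  (Hin : forall n w, (w < N n.+1)%N -> exists v, (v < N n)%N /\ (0 < k n v w)%N)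
  (Hk : forall n v w, (v < N n)%N -> (w < N n.+1)%N -> (n < k n v w)%N) :
  is_top_groupoid_aut N k (Phi k 1%R) /\
  (forall (x : epath) (l : int), is_inf_path N k x ->
     (forall z, gorbit N k x z <-> gorbit N k (alpha_pow k l x) z) -> l = 0%R) /\
  (exists B : (gelt -> Prop) -> Prop,
     unit_basis N k B /\
     forall V, B V ->
       [/\ gcompact N k V, isOpen N k V, bisection N k V &
           exists l : nat, (0 < l)%N /\ forall g, V g -> V (Phi k (- l%:Z)%R g)]).
Proof.
split; first exact: Phi1_top_groupoid_aut.
split; first by move=> x l; apply: orbit_alpha_pow_eq0.
exists (cylinder_sets N k); split; first exact: cylinder_sets_unit_basis.
move=> V [a [mu [v [hf ->]]]]; split.
- exact: Zset_diag_compact.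
- exact: isOpen_Zset.
- exact: Zset_diag_bisection.
- exact: Zset_diag_periodic.
Qed.
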